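(* Let $n\ge2$ be an integer, $t\in(0,1/2]$ and $\lambda>0$. Then $$\big(t+(1-t)\lambda^{1-n}\big)\big(t+(1-t)\lambda\big)^{n-1}-1\ge\frac{t}{8}\log^2(\lambda).$$ *)

From Stdlib Require Import Reals.

(* Write [F_k = (t + (1-t) y^-k) (t + (1-t) y)^k]. One step increases it by
   [t (1-t) (y - 1) (y - y^-k) (t + (1-t) y)^k / y >= 0], since [y] and [y^-k]
   lie on the same side of [1]; so [F_(n-1) >= F_1]. The case [k = 1] is
   explicit: [F_1 - 1 = t (1-t) (y + 1/y - 2)], and with [x = ln y] the
   elementary bound [e^x + e^-x - 2 >= x^2/4] together with [1 - t >= 1/2]
   gives the claim. *)

From Stdlib Require Import Reals ZArith Lra Lia.
Open Scope R_scope.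

Definition mixed_power (t y : R) (k : nat) : R :=
  (t + (1 - t) * / y ^ k) * (t + (1 - t) * y) ^ k.

Lemma powerRZ_one_sub_of_nat (y : R) (n : nat) : (1 <= n)%nat ->
  powerRZ y (1 - Z.of_nat n)%Z = / y ^ (n - 1).
Proof.
  intros hn.
  replace (1 - Z.of_nat n)%Z with (- Z.of_nat (n - 1))%Z by lia.
  now rewrite powerRZ_neg', <- pow_powerRZ.
Qed.

Lemma pow_sub1_same_sign (y : R) (k : nat) : 0 < y -> 0 <= (y - 1) * (1 - / y ^ k).
Proof.
  intros hy.
  assert (hyk : 0 < y ^ k) by now apply pow_lt.
  assert (hsign : 0 <= (y - 1) * (y ^ k - 1)).
  { destruct (Rle_dec 1 y) as [h | h].
    - pose proof (pow_R1_Rle y k h). nra.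
    - assert (y ^ k <= 1) by (rewrite <- (pow1 k); apply pow_incr; lra). nra. }
  replace ((y - 1) * (1 - / y ^ k)) with ((y - 1) * (y ^ k - 1) * / y ^ k)
    by (field; lra).
  apply Rmult_le_pos; [exact hsign | left; now apply Rinv_0_lt_compat].
Qed.

Lemma mixed_power_succ_sub (t y : R) (k : nat) : 0 < y ->
  mixed_power t y (S k) - mixed_power t y k =
  t * (1 - t) * ((y - 1) * (y - / y ^ k))
    * (t + (1 - t) * y) ^ k / y.
Proof.
  intros hy.
  assert (y ^ k <> 0) by (apply pow_nonzero; lra).
  unfold mixed_power; simpl; field; lra.
Qed.

Lemma mixed_power_le_succ (t y : R) (k : nat) : 0 <= t <= 1 -> 0 < y ->
  mixed_power t y k <= mixed_power t y (S k).
Proof.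
  intros ht hy.
  assert (0 <= (t + (1 - t) * y) ^ k) by (apply pow_le; nra).
  assert (0 <= (y - 1) * (y - / y ^ k)).
  { replace ((y - 1) * (y - / y ^ k))
      with ((y - 1) * (y - 1) + (y - 1) * (1 - / y ^ k)) by ring.
    pose proof (pow_sub1_same_sign y k hy). pose proof (Rle_0_sqr (y - 1)).
    unfold Rsqr in *. lra. }
  assert (0 <= t * (1 - t) * ((y - 1) * (y - / y ^ k))
                  * (t + (1 - t) * y) ^ k / y).
  { apply Rmult_le_pos; [| left; now apply Rinv_0_lt_compat].
    apply Rmult_le_pos; [| assumption].
    apply Rmult_le_pos; nra. }
  pose proof (mixed_power_succ_sub t y k hy). lra.
Qed.

Lemma mixed_power_le (t y : R) (k m : nat) : 0 <= t <= 1 -> 0 < y ->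
  (k <= m)%nat -> mixed_power t y k <= mixed_power t y m.
Proof.
  intros ht hy hkm.
  induction hkm as [| m _ IH]; [lra |].
  eapply Rle_trans; [exact IH | now apply mixed_power_le_succ].
Qed.

Lemma mixed_power_1 (t y : R) : 0 < y ->
  mixed_power t y 1 - 1 = t * (1 - t) * (y + / y - 2).
Proof. intros hy. unfold mixed_power; simpl; field; lra. Qed.

Lemma exp_add_exp_opp_ge (x : R) : x ^ 2 / 4 <= exp x + exp (- x) - 2.
Proof.
  assert (hpos : forall u, 0 <= u -> u ^ 2 / 4 <= exp u + exp (- u) - 2).
  { intros u hu.
    (* [exp u = exp (u/2)^2] with [exp (u/2) >= 1 + u/2] and [exp (-u) >= 1 - u]. *)
    pose proof (exp_ineq1_le (u / 2)). pose proof (exp_ineq1_le (- u)).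
    assert (exp u = exp (u / 2) * exp (u / 2)) by (rewrite <- exp_plus; f_equal; lra).
    nra. }
  destruct (Rle_dec 0 x) as [hx | hx]; [now apply hpos |].
  pose proof (hpos (- x) ltac:(lra)) as h.
  rewrite Ropp_involutive in h. replace (x ^ 2) with ((- x) ^ 2) by ring. lra.
Qed.

Lemma add_inv_sub2_ge_ln_sq (y : R) : 0 < y -> (ln y) ^ 2 / 4 <= y + / y - 2.
Proof.
  intros hy.
  rewrite <- (exp_ln y) at 2 3 by exact hy.
  rewrite <- exp_Ropp.
  apply exp_add_exp_opp_ge.
Qed.

Theorem mainTheorem16 (n : nat) (t lambda : R)
  (hn : (2 <= n)%nat) (ht0 : 0 < t) (ht1 : t <= 1/2) (hl : 0 < lambda) :
  (t + (1 - t) * powerRZ lambda (1 - Z.of_nat n)%Z) * (t + (1 - t) * lambda) ^ (n - 1) - 1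
  >= t / 8 * (ln lambda) ^ 2.
Proof.
  rewrite powerRZ_one_sub_of_nat by lia.
  fold (mixed_power t lambda (n - 1)).
  assert (hmono : mixed_power t lambda 1 <= mixed_power t lambda (n - 1))
    by (apply mixed_power_le; lra || lia).
  pose proof (mixed_power_1 t lambda hl) as hF1.
  pose proof (add_inv_sub2_ge_ln_sq lambda hl) as hbound.
  assert (hsq : 0 <= (ln lambda) ^ 2) by apply pow2_ge_0.
  assert (t * (1 / 2) * ((ln lambda) ^ 2 / 4)
          <= t * (1 - t) * (lambda + / lambda - 2))
    by (apply Rmult_le_compat; nra).
  lra.
Qed.
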